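(* Let $G$ be a finite connected $\gamma$-doubling graph and let $\varepsilon>0$. Then Algorithm 1 (with any ranking) has, within $O(\gamma^{\lceil\log_2\frac{2}{\varepsilon}\rceil+1})$ one-to-all distance queries (or at its termination if it terminates earlier), selected a node $u$ with $e(u)\le(1+\varepsilon)\operatorname{rad}(G)$; and Algorithm 3 has, within $O(\gamma^{\lceil\log_2\frac{2}{\varepsilon}\rceil+1})$ one-to-all distance queries (or at its termination if earlier), selected a node $u$ with $e(u)\ge(1-\varepsilon)\operatorname{diam}(G)$. The $O(\cdot)$ hides an absolute constant.
   Context: $G$ is undirected, unweighted, connected with node set $V$; $d$ shortest-path distance; $e(u)=\max_v d(u,v)$; $\operatorname{rad}(G)=\min_u e(u)$, $\operatorname{diam}(G)=\max_u e(u)$; $B[u,\rho]=\{v:d(u,v)\le\rho\}$. $G$ is $\gamma$-doubling if every ball $B[u,\rho]$ is included in the union of at most $\gamma$ balls of radius $\rho/2$. A ranking $r$ is an injective map $V\to$ totally ordered set; $A_r(u)$ is the node $v$ maximizing $(d(u,v),r(v))$ lexicographically. A one-to-all distance query from $x$ computes $(d(x,v))_v$. $e_L(v)=\max_{x\in L}d(v,x)$ ($0$ if $L=\emptyset$), $e^U(v)=\min_{x\in U}(d(v,x)+e(x))$ ($+\infty$ if $U=\emptyset$). Algorithm 1: $L=K=\emptyset$; repeat: select $u$ with $e_L(u)$ minimal; query from $u$, compute $e(u)$; if $e(u)=e_L(u)$ halt outputting $u$; else query from $a=A_r(u)$, add $u$ to $K$, $a$ to $L$; then halt (outputting $c\in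 K$ of minimum eccentricity) if $\min_v e_L(v)\ge\min_{w\in K}e(w)$. Algorithm 3: $U=K=\emptyset$; repeat: select $u$ with $e^U(u)$ maximal; query from $u$, compute $e(u)$, add $u$ to $K$; choose any $x$ with $d(u,x)+e(x)=e(u)$ (e.g. $x=u$), query from $x$, add $x$ to $U$; stop when $\max_{w\in K}e(w)\ge\max_v e^U(v)$. ''Selected'' means chosen as $u$ in some iteration. *)

From HB Require Import structures.
From mathcomp Require Import all_boot all_order all_algebra.
From mathcomp Require Import reals exp.

Set Implicit Arguments.
Unset Strict Implicit.
Unset Printing Implicit Defensive.

Import Order.TTheory GRing.Theory Num.Theory.
Local Open Scope ring_scope.

Section Graph.
Variables (T : finType) (adj : rel T).

Definition simple_graph : Prop :=
  symmetric adj /\ irreflexive adj.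
Definition connected_graph : Prop := forall u v : T, connect adj u v.

Definition walk_of_len (u v : T) (n : nat) : bool :=
  [exists p : n.-tuple T, path adj u p && (last u p == v)].

(** Shortest-path distance: the least n such that a walk of length n from
    u to v exists (any shortest path has < #|T| edges; the value #|T| is only
    returned when v is unreachable, which never happens in a connected graph). *)
Definition dist (u v : T) : nat := find (walk_of_len u v) (iota 0 #|T|).

Definition ecc (u : T) : nat := \max_(v : T) dist u v.
Definition rad : nat := \big[minn/#|T|]_(u : T) ecc u.
Definition diam : nat := \max_(u : T) ecc u.

Definition doubling (R : realType) (gamma : nat) : Prop :=
  forall (u : T) (rho : R), 0 <= rho ->
    exists cs : seq T, (size cs <= gamma)%N /\
      forall v : T, (dist u v)%:R <= rho ->
        exists2 c, c \in cs & (dist c v)%:R <= rho / 2.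

Definition eL (L : seq T) (v : T) : nat := \max_(x <- L) dist v x.

(** A_r(u): the node v maximizing (d(u,v), r(v)) lexicographically. *)
Definition is_A disp (X : orderType disp) (r : T -> X) (u a : T) : bool :=
  [forall v, (dist u v < dist u a)%N ||
             ((dist u v == dist u a) && (r v <= r a)%O)].
Definition A_r disp (X : orderType disp) (r : T -> X) (u : T) : T :=
  odflt u [pick a | is_A r u a].

(** The halting test performed after adding u to K and a to L:
    min_v e_L(v) >= min_{w in K} e(w). *)
Definition halt1_test (L K : seq T) : bool :=
  [forall v, has (fun w => ecc w <= eL L v)%N K].

(** [run1 r L K s]: s is the sequence of nodes selected by a valid execution
    of Algorithm 1 started from state (L,K), in which the algorithm has not
    halted before the last selection of s.  Each selection costs 2 queries
    (from u, then from A_r(u)) except possibly the last one. *)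
Fixpoint run1 disp (X : orderType disp) (r : T -> X) (L K : seq T) (s : seq T)
  : bool :=
  match s with
  | [::] => true
  | u :: s' =>
      [forall v, (eL L u <= eL L v)%N] &&
      (if s' is [::] then true else
         [&& ecc u != eL L u,
             ~~ halt1_test (A_r r u :: L) (u :: K) &
             run1 r (A_r r u :: L) (u :: K) s'])
  end.

Fixpoint halts1 disp (X : orderType disp) (r : T -> X) (L K : seq T)
  (s : seq T) : bool :=
  match s with
  | [::] => false
  | [:: u] => (ecc u == eL L u) || halt1_test (A_r r u :: L) (u :: K)
  | u :: s' => halts1 r (A_r r u :: L) (u :: K) s'
  end.

(** e^U(v) = min_{x in U} (d(v,x) + e(x)), with None standing for +infinity
    (U empty). *)
Definition eU (U : seq T) (v : T) : option nat :=
  if U is x0 :: U' then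
    Some (\big[minn/(dist v x0 + ecc x0)%N]_(x <- U') (dist v x + ecc x)%N)
  else None.

Definition ole (a b : option nat) : bool :=
  match a, b with
  | _, None => true
  | None, Some _ => false
  | Some m, Some n => (m <= n)%N
  end.

(** stopping test: max_{w in K} e(w) >= max_v e^U(v) *)
Definition halt3_test (U K : seq T) : bool :=
  has (fun w => [forall v, ole (eU U v) (Some (ecc w))]) K.

(** [run3 U K s]: s is the sequence of pairs (u, x) (selected node, second
    queried node) of a valid execution of Algorithm 3 from state (U,K), in
    which the algorithm did not stop before the last iteration of s.  Each
    iteration costs 2 queries. *)
Fixpoint run3 (U K : seq T) (s : seq (T * T)) : bool :=
  match s with
  | [::] => true
  | (u, x) :: s' =>
      [&& [forall v, ole (eU U v) (eU U u)],
          (dist u x + ecc x == ecc u)%N &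
          (if s' is [::] then true else
             ~~ halt3_test (x :: U) (u :: K) && run3 (x :: U) (u :: K) s')]
  end.

Fixpoint halts3 (U K : seq T) (s : seq (T * T)) : bool :=
  match s with
  | [::] => false
  | [:: (u, x)] => halt3_test (x :: U) (u :: K)
  | (u, x) :: s' => halts3 (x :: U) (u :: K) s'
  end.

End Graph.

Definition budget (R : realType) (gamma : nat) (eps : R) : R :=
  (gamma%:R : R) ^ (Num.ceil (ln (2 / eps) / ln 2) + 1)%R.

From Pilot Require Import Defs.
From HB Require Import structures.
From mathcomp Require Import all_boot all_order all_algebra.
From mathcomp Require Import reals exp.
From mathcomp Require Import lra zify.
Import Order.TTheory GRing.Theory Num.Theory.
Import Defs.

(* Both halves are packing arguments in a doubling graph.
   Algorithm 1: let c be a node with e(c) <= rad.  A node u_j selected after u_i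
   minimises e_L with A_r(u_i) in L, so d(u_j, A_r(u_i)) <= e_L(u_j) <= e_L(c) <= rad;
   since A_r(u_i) is farthest from u_i, e(u_i) <= d(u_i, u_j) + rad.  Hence if the
   first gamma^k + 2 selections all had e > (1 + eps) rad, they would be pairwise
   more than eps rad apart, and all but the first would lie in the ball of radius
   rad around A_r(u_0).  Applying the doubling property k times covers that ball by
   gamma^k balls of radius rad / 2^k <= eps rad / 2, each holding at most one of them.
   Algorithm 3: let p be diametral.  A node u_j selected after (u_i, x_i) maximises
   e^U with x_i in U, so diam <= e^U(p) <= d(u_j, x_i) + e(x_i), and with
   e(u_i) = d(u_i, x_i) + e(x_i) this gives diam <= d(u_i, u_j) + e(u_i); the same
   packing in the ball of radius diam around p bounds the run of bad selections.
   If the algorithm halts earlier, its halting test exhibits a good node of K. *)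

Set Implicit Arguments.
Unset Strict Implicit.
Unset Printing Implicit Defensive.

Local Open Scope ring_scope.

Lemma bigmin_le_seq (I : eqType) (F : I -> nat) x0 (U : seq I) y :
  y \in x0 :: U -> (\big[minn/F x0]_(x <- U) F x <= F y)%N.
Proof.
elim: U => [|z U IH]; first by rewrite big_nil inE => /eqP->.
rewrite big_cons => y_in; have [-> | y_z] := eqVneq y z; first exact: geq_minl.
by apply: leq_trans (geq_minr _ _) (IH _); move: y_in; rewrite !inE (negPf y_z).
Qed.

Lemma cover_concat (T : eqType) (P Q : T -> T -> Prop) m (cs0 : seq T) :
  (forall c, exists cs : seq T,
     (size cs <= m)%N /\ forall v, Q c v -> exists2 d, d \in cs & P d v) ->
  exists cs : seq T, (size cs <= m * size cs0)%N /\
    forall c v, c \in cs0 -> Q c v -> exists2 d, d \in cs & P d v.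
Proof.
move=> cover; elim: cs0 => [|c cs0 [cs1 [size_cs1 cover1]]]; first by exists [::].
have [cs [size_cs cover_c]] := cover c.
exists (cs ++ cs1); split; first by rewrite size_cat mulnS leq_add.
move=> c' v; rewrite inE => /predU1P[-> | c'_cs0] Qv.
  by have [d d_cs Pd] := cover_c v Qv; exists d; rewrite ?mem_cat ?d_cs.
by have [d d_cs1 Pd] := cover1 c' v c'_cs0 Qv; exists d; rewrite ?mem_cat ?d_cs1 ?orbT.
Qed.

Section Selection.
Variables (R : realType) (A : eqType).

Lemma select_in_prefix (P : pred A) (halted : bool) (s : seq A) N (bound : R) :
  (2 * N.-1)%:R <= bound -> (halted \/ (N <= size s)%N -> has P (take N s)) ->
  halted \/ bound < (2 * size s)%:R ->
  exists2 x, x \in s & (2 * index x s)%:R <= bound /\ P x.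
Proof.
move=> N_bound prefix halted_or_long.
have /hasP[x x_take Px] : has P (take N s).
  apply: prefix; case: halted_or_long => [|long]; [by left | right].
  by have := le_lt_trans N_bound long; rewrite ltr_nat; lia.
exists x; first exact: mem_take x_take.
split=> //; apply: le_trans N_bound; rewrite ler_nat.
by have := index_ltn x_take; lia.
Qed.

Lemma select_head (P : pred A) (halted : bool) (s : seq A) (bound : R) :
  0 <= bound -> (halted -> s != [::]) -> {in s, forall x, P x} ->
  halted \/ bound < (2 * size s)%:R ->
  exists2 x, x \in s & (2 * index x s)%:R <= bound /\ P x.
Proof.
move=> bound_ge0 halted_s all_P; apply: (select_in_prefix (N := 1)); first by rewrite muln0.
case: s => [|x s] in halted_s all_P *; first by case=> // /halted_s.
by rewrite /= all_P ?mem_head.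
Qed.

End Selection.

Section Graph.
Variables (T : finType) (adj : rel T).
Hypotheses (adjC : symmetric adj) (adj_connected : connected_graph adj).

Lemma walk_of_lenP u v n :
  reflect (exists p : seq T, [/\ size p = n, path adj u p & last u p = v])
          (walk_of_len adj u v n).
Proof.
apply: (iffP existsP) => [[p /andP[p_path /eqP p_last]] | [p [p_size p_path p_last]]].
  by exists p; rewrite size_tuple.
have p_size' : size p == n by rewrite p_size.
by exists (Tuple p_size'); rewrite /= p_path p_last eqxx.
Qed.

Lemma short_walk u v : exists2 n, (n < #|T|)%N & walk_of_len adj u v n.
Proof.
have /connectP[p p_path ->] := adj_connected u v.
have [q q_path q_uniq _] := shortenP p_path.
exists (size q); last by apply/walk_of_lenP; exists q.
by move/card_uniqP: q_uniq => /= <-; apply: max_card.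
Qed.

Lemma dist_walk u v : walk_of_len adj u v (dist adj u v).
Proof.
have [n n_lt walk_n] := short_walk u v.
have has_walk : has (walk_of_len adj u v) (iota 0 #|T|).
  by apply/hasP; exists n; rewrite ?mem_iota.
have := nth_find 0%N has_walk; rewrite nth_iota ?add0n //.
by move: has_walk; rewrite has_find size_iota.
Qed.

Lemma dist_min u v n : walk_of_len adj u v n -> (dist adj u v <= n)%N.
Proof.
move=> walk_n; rewrite leqNgt; apply/negP => n_lt.
have := before_find 0%N n_lt; rewrite nth_iota ?add0n ?walk_n //.
apply: leq_trans n_lt _.
by rewrite -(size_iota 0 #|T|) find_size.
Qed.

Lemma distxx u : dist adj u u = 0%N.
Proof. by apply/eqP; rewrite -leqn0; apply: dist_min; apply/walk_of_lenP; exists [::]. Qed.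

Lemma dist_triangle u v w : (dist adj u w <= dist adj u v + dist adj v w)%N.
Proof.
apply: dist_min; apply/walk_of_lenP.
have /walk_of_lenP[p [<- p_path p_last]] := dist_walk u v.
have /walk_of_lenP[q [<- q_path <-]] := dist_walk v w.
by exists (p ++ q); rewrite size_cat cat_path last_cat p_last p_path q_path.
Qed.

Lemma distC u v : dist adj u v = dist adj v u.
Proof.
suff dist_le x y : (dist adj x y <= dist adj y x)%N by apply/eqP; rewrite eqn_leq !dist_le.
apply: dist_min; apply/walk_of_lenP.
have /walk_of_lenP[p [<- p_path <-]] := dist_walk y x.
exists (rev (belast y p)); rewrite size_rev size_belast; split=> //.
  by rewrite rev_path (eq_path (e' := adj)) // => a b; rewrite /= adjC.
by case: p {p_path} => //= a p; rewrite rev_cons last_rcons.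
Qed.

Lemma dist_le_ecc u v : (dist adj u v <= ecc adj u)%N.
Proof. exact: leq_bigmax. Qed.

Lemma ecc_triangle u v : (ecc adj u <= dist adj u v + ecc adj v)%N.
Proof.
apply/bigmax_leqP => w _.
by apply: leq_trans (dist_triangle u v w) _; rewrite leq_add2l dist_le_ecc.
Qed.

Lemma ecc_lt_card u : (ecc adj u < #|T|)%N.
Proof.
have [v ->] : {v | ecc adj u = dist adj u v}.
  by apply: bigop.eq_bigmax; apply/card_gt0P; exists u.
have [n n_lt walk_n] := short_walk u v.
exact: leq_ltn_trans (dist_min walk_n) n_lt.
Qed.

Lemma exists_ecc_le_rad (t : T) : exists c, (ecc adj c <= rad adj)%N.
Proof.
have [c _ c_min] := arg_minnP (ecc adj) (isT : xpredT t).
exists c; rewrite /rad; elim/big_ind: _ => [||v _]; rewrite ?c_min //.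
  exact/ltnW/ecc_lt_card.
by move=> m n c_m c_n; rewrite leq_min c_m c_n.
Qed.

Lemma ecc_le_2rad u : (ecc adj u <= 2 * rad adj)%N.
Proof.
have [c c_rad] := exists_ecc_le_rad u.
apply: leq_trans (ecc_triangle u c) _; rewrite distC mul2n -addnn.
by apply: leq_add => //; apply: leq_trans (dist_le_ecc c u) c_rad.
Qed.

Lemma exists_ecc_eq_diam (t : T) : exists p, diam adj = ecc adj p.
Proof.
have [p ->] : {p | diam adj = ecc adj p}.
  by apply: bigop.eq_bigmax; apply/card_gt0P; exists t.
by exists p.
Qed.

Lemma dist_le_eL L v x : x \in L -> (dist adj v x <= eL adj L v)%N.
Proof. by move=> x_L; apply: leq_bigmax_seq. Qed.

Lemma eL_le_ecc L v : (eL adj L v <= ecc adj v)%N.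
Proof. by apply/bigmax_leqP_seq => x _ _; apply: dist_le_ecc. Qed.

Lemma is_A_A_r disp (X : orderType disp) (r : T -> X) u : is_A adj r u (A_r adj r u).
Proof.
rewrite /A_r; case: pickP => //= no_A; exfalso.
have [a0 _ a0_max] := arg_maxnP (dist adj u) (isT : xpredT u).
have [a a_far a_max] :=
  Order.TotalTheory.arg_maxP r (P := fun a => dist adj u a == dist adj u a0) (eqxx _).
move: (no_A a) => /negP; apply; apply/forallP => v.
have v_le : (dist adj u v <= dist adj u a0)%N := a0_max v isT.
rewrite (eqP a_far) ltn_neqAle v_le andbT.
by case: eqP => //= v_far; apply: a_max; rewrite v_far.
Qed.

Lemma ecc_le_dist_A disp (X : orderType disp) (r : T -> X) u :
  (ecc adj u <= dist adj u (A_r adj r u))%N.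
Proof.
apply/bigmax_leqP => v _.
by case/orP: (forallP (is_A_A_r r u) v) => [/ltnW | /andP[/eqP -> _]].
Qed.

Lemma ecc_le_of_eU U v n : ole (eU adj U v) (Some n) -> (ecc adj v <= n)%N.
Proof.
case: U => [|x0 U] //=; apply: leq_trans.
elim/big_ind: _ => [|m k le_m le_k|x _]; by rewrite ?leq_min ?le_m ?le_k ?ecc_triangle.
Qed.

Lemma ecc_le_of_eU_le U u v x : x \in U -> ole (eU adj U v) (eU adj U u) ->
  (ecc adj v <= dist adj u x + ecc adj x)%N.
Proof.
case: U => [|x0 U] // x_U /ecc_le_of_eU /leq_trans; apply.
exact: (bigmin_le_seq (fun y => dist adj u y + ecc adj y)%N).
Qed.

Section Packing.
Variable R : realType.

Lemma doubling_cover_iter gamma : doubling adj R gamma ->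
  forall k u (rho : R), 0 <= rho -> exists cs : seq T, (size cs <= gamma ^ k)%N /\
    forall v, (dist adj u v)%:R <= rho ->
      exists2 c, c \in cs & (dist adj c v)%:R <= rho / 2 ^+ k.
Proof.
move=> doubling_gamma; elim=> [|k IH] u rho rho_ge0.
  by exists [:: u]; split=> // v v_near; exists u; rewrite ?mem_head ?divr1.
have [cs0 [size_cs0 cover0]] := doubling_gamma u rho rho_ge0.
have [cs [size_cs cover]] := cover_concat (m := gamma ^ k) cs0
  (fun c => IH c (rho / 2) (divr_ge0 rho_ge0 (ler0n _ 2))).
exists cs; split; first by rewrite expnSr (leq_trans size_cs) // leq_mul.
move=> v /cover0[c c_cs0 /(cover c v c_cs0)[d d_cs near_d]]; exists d => //.
by move: near_d; rewrite exprSr invfM [2 ^- k / 2]mulrC mulrA.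
Qed.

Lemma separated_size_le (r : R) (cs pts : seq T) :
  pairwise (fun v w => 2 * r < (dist adj v w)%:R) pts ->
  {in pts, forall v, exists2 c, c \in cs & (dist adj c v)%:R <= r} ->
  (size pts <= size cs)%N.
Proof.
elim: pts cs => [|v pts IH] cs //; rewrite pairwise_cons => /andP[/allP far sep] cover.
have [c c_cs near_v] := cover v (mem_head _ _).
suff : (size pts <= size (rem c cs))%N by rewrite size_rem //; case: (cs) c_cs.
apply: IH sep _ => w w_pts; have [c' c'_cs near_w] := cover w (mem_behead (s := v :: pts) w_pts).
exists c' => //; apply: rem_mem c'_cs; move: (far w w_pts); apply: contraTneq => c'_c.
rewrite c'_c in near_w.
rewrite -leNgt (le_trans (_ : _ <= ((dist adj c v) + (dist adj c w))%:R)) //.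
  by rewrite ler_nat (distC c v) dist_triangle.
by rewrite natrD mulr2n mulrDl mul1r lerD.
Qed.

Lemma doubling_packing gamma k (eps rho : R) u (pts : seq T) :
  doubling adj R gamma -> 0 <= rho -> 2 <= eps * 2 ^+ k ->
  {in pts, forall v, (dist adj u v)%:R <= rho} ->
  pairwise (fun v w => eps * rho < (dist adj v w)%:R) pts ->
  (size pts <= gamma ^ k)%N.
Proof.
move=> doubling_gamma rho_ge0 k_large near far.
have [cs [size_cs cover]] := doubling_cover_iter doubling_gamma k u rho_ge0.
apply: leq_trans size_cs; apply: (separated_size_le (r := rho / 2 ^+ k)).
  apply: sub_pairwise far => v w; apply: le_lt_trans.
  by rewrite mulrCA mulrC ler_wpM2r // ler_pdivrMr ?exprn_gt0.
by move=> v /near /cover.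
Qed.

Lemma doubling_gt0 gamma (t : T) : doubling adj R gamma -> (0 < gamma)%N.
Proof.
move=> doubling_gamma; have [cs [size_cs cover]] := doubling_gamma t 0 (lexx _).
have t_near : (dist adj t t)%:R <= 0 :> R by rewrite distxx.
have [c c_cs _] := cover t t_near.
by apply: leq_trans size_cs; case: (cs) c_cs.
Qed.

End Packing.

Section Algorithm1.
Variables (disp : Order.disp_t) (X : orderType disp) (r : T -> X).

Lemma run1_cons L K u s : run1 adj r L K (u :: s) ->
  (forall v, eL adj L u <= eL adj L v)%N /\ run1 adj r (A_r adj r u :: L) (u :: K) s.
Proof. by case/andP => /forallP L_min; case: s => [|u' s] // /and3P[_ _ run]. Qed.

Lemma run1_dist_le_ecc c L K s : run1 adj r L K s ->
  {in s, forall u, {in L, forall x, dist adj u x <= ecc adj c}}%N.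
Proof.
elim: s L K => [|u s IH] L K // /run1_cons[L_min run] v.
rewrite inE => /predU1P[-> x x_L | v_s x x_L].
  exact: leq_trans (dist_le_eL _ x_L) (leq_trans (L_min c) (eL_le_ecc _ _)).
by apply: (IH _ _ run v v_s x); rewrite inE x_L orbT.
Qed.

Lemma run1_pairwise_ecc c L K s : run1 adj r L K s ->
  pairwise (fun ui uj => ecc adj ui <= dist adj ui uj + ecc adj c)%N s.
Proof.
elim: s L K => [|u s IH] L K // /run1_cons[_ run].
rewrite pairwise_cons (IH _ _ run) andbT; apply/allP => v v_s.
apply: leq_trans (ecc_le_dist_A r u) (leq_trans (dist_triangle u v _) _).
by rewrite leq_add2l (run1_dist_le_ecc c run v_s) ?mem_head.
Qed.

Lemma halts1_ecc_le c L K s : run1 adj r L K s -> halts1 adj r L K s ->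
  exists2 w, (w \in s) || (w \in K) & (ecc adj w <= ecc adj c)%N.
Proof.
elim: s L K => [|u s IH] L K // /run1_cons[L_min run].
case: s IH run => [|u' s] IH run /=.
  case/orP => [/eqP ecc_u | /forallP/(_ c)/hasP[w w_K w_c]].
    by exists u; rewrite ?mem_head // ecc_u (leq_trans (L_min c)) ?eL_le_ecc.
  by exists w; [move: w_K; rewrite !inE | exact: leq_trans w_c (eL_le_ecc _ _)].
move/(IH _ _ run) => [w w_in w_c]; exists w => //; move: w_in; rewrite !inE.
by case/orP => [-> | /orP[-> | ->]]; rewrite ?orbT.
Qed.

End Algorithm1.

Lemma run3_cons U K u x s : run3 adj U K ((u, x) :: s) ->
  [/\ forall v, ole (eU adj U v) (eU adj U u),
      (dist adj u x + ecc adj x)%N = ecc adj u & run3 adj (x :: U) (u :: K) s].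
Proof.
case/and3P => /forallP U_max /eqP ecc_u.
by case: s => [|[u' x'] s] // /andP[_ run].
Qed.

Lemma run3_ecc_le p U K s : run3 adj U K s ->
  {in s, forall q, {in U, forall x, ecc adj p <= dist adj q.1 x + ecc adj x}}%N.
Proof.
elim: s U K => [|[u y] s IH] U K // /run3_cons[U_max _ run] q.
rewrite inE => /predU1P[-> x x_U | q_s x x_U]; first exact: ecc_le_of_eU_le x_U (U_max p).
by apply: (IH _ _ run q q_s x); rewrite inE x_U orbT.
Qed.

Lemma run3_pairwise_ecc p U K s : run3 adj U K s ->
  pairwise (fun qi qj => ecc adj p <= dist adj qi.1 qj.1 + ecc adj qi.1)%N s.
Proof.
elim: s U K => [|[u x] s IH] U K // /run3_cons[_ ecc_u run].
rewrite pairwise_cons (IH _ _ run) andbT; apply/allP => q q_s /=.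
apply: leq_trans (run3_ecc_le p run q_s (mem_head _ _)) _.
by rewrite -ecc_u addnA leq_add2r (distC u) dist_triangle.
Qed.

Lemma halts3_ecc_ge p U K s : run3 adj U K s -> halts3 adj U K s ->
  exists2 w, (w \in map fst s) || (w \in K) & (ecc adj p <= ecc adj w)%N.
Proof.
elim: s U K => [|[u x] s IH] U K // /run3_cons[_ _ run].
case: s IH run => [|q s] IH run.
  case/hasP => w w_K /forallP/(_ p)/ecc_le_of_eU p_w.
  by exists w => //; move: w_K; rewrite !inE.
move/(IH _ _ run) => [w w_in p_w]; exists w => //; move: w_in; rewrite !inE.
by case/orP => [-> | /orP[-> | ->]]; rewrite ?orbT.
Qed.

Section Approximation.
Variables (R : realType) (gamma : nat).
Hypothesis doubling_gamma : doubling adj R gamma.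

Lemma run1_good_prefix disp (X : orderType disp) (r : T -> X) (eps : R) k u0 s :
  0 < eps -> 2 <= eps * 2 ^+ k -> run1 adj r [::] [::] (u0 :: s) ->
  halts1 adj r [::] [::] (u0 :: s) \/ ((gamma ^ k).+2 <= size (u0 :: s))%N ->
  has (fun u => (ecc adj u)%:R <= (1 + eps) * (rad adj)%:R) (take (gamma ^ k).+2 (u0 :: s)).
Proof.
move=> eps_gt0 k_large run halted_or_long.
have [c c_rad] := exists_ecc_le_rad u0.
have rad_ge0 : 0 <= (rad adj)%:R :> R := ler0n _ _.
have [long | short] := leqP (gamma ^ k).+2 (size (u0 :: s)); last first.
  have halted : halts1 adj r [::] [::] (u0 :: s).
    by case: halted_or_long => //; rewrite leqNgt short.
  have [w w_s w_c] := halts1_ecc_le c run halted.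
  rewrite take_oversize ?(ltnW short) //; apply/hasP; exists w; first by rewrite orbF in w_s.
  have : (ecc adj w)%:R <= (rad adj)%:R :> R by rewrite ler_nat (leq_trans w_c).
  nra.
apply: contraT => /hasPn bad.
have [_ run'] := run1_cons run.
set pts := take (gamma ^ k).+1 s.
have far : pairwise (fun v w => eps * (rad adj)%:R < (dist adj v w)%:R) pts.
  have := subseq_pairwise (take_subseq s (gamma ^ k).+1) (run1_pairwise_ecc c run').
  apply: (sub_in_pairwise (P := [pred u | (1 + eps) * (rad adj)%:R < (ecc adj u)%:R])).
  - move=> v w; rewrite inE => v_bad _ /=; rewrite -(ler_nat R) natrD => ecc_v.
    have : (ecc adj c)%:R <= (rad adj)%:R :> R by rewrite ler_nat.
    nra.
  - by apply/allP => v v_pts; rewrite inE ltNge; apply: bad; rewrite /= inE v_pts orbT.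
have near : {in pts, forall v, (dist adj (A_r adj r u0) v)%:R <= (rad adj)%:R :> R}.
  move=> v /mem_take v_s; rewrite ler_nat distC.
  exact: leq_trans (run1_dist_le_ecc c run' v_s (mem_head _ _)) c_rad.
have := doubling_packing doubling_gamma rad_ge0 k_large near far.
by rewrite size_takel ?ltnn.
Qed.

Lemma run3_good_prefix (eps : R) k q0 s :
  0 < eps -> 2 <= eps * 2 ^+ k -> run3 adj [::] [::] (q0 :: s) ->
  halts3 adj [::] [::] (q0 :: s) \/ ((gamma ^ k).+1 <= size (q0 :: s))%N ->
  has (fun q => (1 - eps) * (diam adj)%:R <= (ecc adj q.1)%:R) (take (gamma ^ k).+1 (q0 :: s)).
Proof.
move=> eps_gt0 k_large run halted_or_long.
have [p diam_p] := exists_ecc_eq_diam q0.1.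
have diam_ge0 : 0 <= (diam adj)%:R :> R := ler0n _ _.
have [long | short] := leqP (gamma ^ k).+1 (size (q0 :: s)); last first.
  have halted : halts3 adj [::] [::] (q0 :: s).
    by case: halted_or_long => //; rewrite leqNgt short.
  have [w /[!orbF] /mapP[q q_s ->] p_w] := halts3_ecc_ge p run halted.
  rewrite take_oversize ?(ltnW short) //; apply/hasP; exists q => //.
  have : (diam adj)%:R <= (ecc adj q.1)%:R :> R by rewrite ler_nat diam_p.
  nra.
apply: contraT => /hasPn bad.
set pts := take (gamma ^ k).+1 (q0 :: s).
have far : pairwise (fun v w => eps * (diam adj)%:R < (dist adj v w)%:R) (map fst pts).
  rewrite pairwise_map.
  have := subseq_pairwise (take_subseq (q0 :: s) (gamma ^ k).+1) (run3_pairwise_ecc p run).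
  apply: (sub_in_pairwise (P := [pred q | (ecc adj q.1)%:R < (1 - eps) * (diam adj)%:R])).
  - move=> qi qj; rewrite inE => qi_bad _ /=; rewrite -diam_p -(ler_nat R) natrD.
    nra.
  - by apply/allP => q /bad; rewrite inE ltNge.
have near : {in map fst pts, forall v, (dist adj p v)%:R <= (diam adj)%:R :> R}.
  by move=> v _; rewrite ler_nat diam_p dist_le_ecc.
have := doubling_packing doubling_gamma diam_ge0 k_large near far.
by rewrite size_map size_takel ?ltnn.
Qed.

Lemma run1_selects_good disp (X : orderType disp) (r : T -> X) (eps bound : R) k s :
  0 < eps -> 2 <= eps * 2 ^+ k -> 0 <= bound ->
  ((0 < gamma)%N -> (2 * (gamma ^ k).+1)%:R <= bound) ->
  run1 adj r [::] [::] s -> halts1 adj r [::] [::] s \/ bound < (2 * size s)%:R ->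
  exists2 u, u \in s &
    (2 * index u s)%:R <= bound /\ (ecc adj u)%:R <= (1 + eps) * (rad adj)%:R.
Proof.
move=> eps_gt0 k_large bound_ge0 bound_large run halted_or_long.
case: s => [|u0 s] in run halted_or_long *.
  by case: halted_or_long => //; rewrite ltNge bound_ge0.
apply: (select_in_prefix (N := (gamma ^ k).+2)) halted_or_long.
  exact/bound_large/(doubling_gt0 u0 doubling_gamma).
exact: run1_good_prefix.
Qed.

Lemma run3_selects_good (eps bound : R) k s :
  0 < eps -> 2 <= eps * 2 ^+ k -> 0 <= bound ->
  ((0 < gamma)%N -> (2 * (gamma ^ k).+1)%:R <= bound) ->
  run3 adj [::] [::] s -> halts3 adj [::] [::] s \/ bound < (2 * size s)%:R ->
  exists2 q, q \in s &
    (2 * index q s)%:R <= bound /\ (1 - eps) * (diam adj)%:R <= (ecc adj q.1)%:R.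
Proof.
move=> eps_gt0 k_large bound_ge0 bound_large run halted_or_long.
case: s => [|q0 s] in run halted_or_long *.
  by case: halted_or_long => //; rewrite ltNge bound_ge0.
apply: (select_in_prefix (N := (gamma ^ k).+1)) halted_or_long.
  by apply: le_trans (bound_large (doubling_gt0 q0.1 doubling_gamma)); rewrite ler_nat leq_mul2l ltnW.
exact: run3_good_prefix.
Qed.

End Approximation.
End Graph.

Lemma budget_exponent (R : realType) gamma (eps : R) : 0 < eps -> eps < 1 ->
  exists k : nat, budget gamma eps = gamma%:R ^+ k.+1 /\ 2 <= eps * 2 ^+ k.
Proof.
move=> eps_gt0 eps_lt1.
set x := ln (2 / eps) / ln 2.
have ln2_gt0 : 0 < ln (2 : R) by rewrite ln_gt0 // ltr1n.
have two_pos : (2 : R) \in Num.pos by rewrite posrE.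
have x_gt1 : 1 < x.
  by rewrite ltr_pdivlMr // mul1r ltr_ln ?posrE ?divr_gt0 // ltr_pdivlMr //; lra.
have [k ceil_k] : exists k : nat, Num.ceil x = k%:Z.
  have : 0 <= Num.ceil x by rewrite ceil_ge0; lra.
  by case: (Num.ceil x) => // k _; exists k.
exists k; split; first by rewrite /budget -/x ceil_k -PoszD addn1.
have := ceil_ge x; rewrite ceil_k ler_pdivrMr // -[k%:~R]/(k%:R) [k%:R * _]mulr_natl -lnXn //.
by rewrite ler_ln ?posrE ?divr_gt0 ?exprn_gt0 // ler_pdivrMr // mulrC.
Qed.

Theorem proposition3 :
  exists C : nat,
  forall (R : realType) (T : finType) (adj : rel T) (gamma : nat) (eps : R),
    simple_graph adj -> connected_graph adj -> doubling adj R gamma ->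
    0 < eps ->
    let bound := C%:R * budget gamma eps in
    (* Algorithm 1, any ranking, any tie-breaking *)
    (forall (disp : Order.disp_t) (X : orderType disp) (r : T -> X),
       injective r ->
       forall s : seq T, run1 adj r [::] [::] s ->
         halts1 adj r [::] [::] s \/ bound < (2 * size s)%:R ->
         exists2 u : T, u \in s &
           ((2 * index u s)%:R <= bound /\
            (ecc adj u)%:R <= (1 + eps) * (rad adj)%:R)) /\
    (* Algorithm 3, any tie-breaking and any choice of x *)
    (forall s : seq (T * T), run3 adj [::] [::] s ->
       halts3 adj [::] [::] s \/ bound < (2 * size s)%:R ->
       exists2 p : T * T, p \in s &
         ((2 * index p s)%:R <= bound /\
          (1 - eps) * (diam adj)%:R <= (ecc adj p.1)%:R)).
Proof.
exists 6%N => R T adj gamma eps [adjC _] adj_connected doubling_gamma eps_gt0 bound.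
have bound_ge0 : 0 <= bound by rewrite mulr_ge0 // exprz_ge0.
have [eps_ge1 | eps_lt1] := lerP 1 eps.
  split=> [disp X r _ |] s _ halted_or_long; apply: select_head halted_or_long => //.
  - by case: s.
  - move=> u _; have := ecc_le_2rad adjC adj_connected u.
    rewrite -(ler_nat R) natrM; have : 0 <= (rad adj)%:R :> R := ler0n _ _.
    nra.
  - by case: s.
  - by move=> q _; rewrite (le_trans _ (ler0n _ _)) // mulr_le0_ge0 // subr_le0.
have [k [budget_k k_large]] := budget_exponent gamma eps_gt0 eps_lt1.
have bound_large : (0 < gamma)%N -> (2 * (gamma ^ k).+1)%:R <= bound.
  move=> gamma_gt0; rewrite /bound budget_k -natrX -natrM ler_nat expnS.
  have : (0 < gamma ^ k)%N by rewrite expn_gt0 gamma_gt0.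
  nia.
split=> [disp X r _ |] s.
  apply: (run1_selects_good adjC adj_connected doubling_gamma eps_gt0 k_large bound_ge0 bound_large).
apply: (run3_selects_good adjC adj_connected doubling_gamma eps_gt0 k_large bound_ge0 bound_large).
Qed.
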